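(* Let $G$ be a strongly connected network on $\mathcal{V}$ with random-walk transition matrix $P$, stationary distribution $\pi$, $\Pi=\mathrm{diag}(\pi)$, and let $L^+$ be the Moore–Penrose pseudo-inverse of $L=\Pi(I-P)$. Then for all $i,k,m\in\mathcal{V}$, $$L^+_{im}+L^+_{kk}\geq L^+_{ik}+L^+_{km}.$$
   Context: $P=D^{-1}A$ for a nonnegative affinity matrix $A$ of a directed graph, $D=\mathrm{diag}(\sum_j a_{ij})$; strongly connected means all nodes mutually reachable. *)

From HB Require Import structures.
From mathcomp Require Import all_boot all_order all_algebra.
From mathcomp Require Import reals.
Set Implicit Arguments. Unset Strict Implicit. Unset Printing Implicit Defensive.
Import Order.TTheory GRing.Theory Num.Theory.
Local Open Scope ring_scope.

Definition nonneg_mx (R : realType) (n : nat) (A : 'M[R]_n) : Prop :=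
  forall i j, 0 <= A i j.

Definition edge_rel (R : realType) (n : nat) (A : 'M[R]_n) : rel 'I_n :=
  fun i j => 0 < A i j.

Definition strongly_connected (R : realType) (n : nat) (A : 'M[R]_n) : Prop :=
  forall i j, connect (edge_rel A) i j.

Definition degree_mx (R : realType) (n : nat) (A : 'M[R]_n) : 'M[R]_n :=
  diag_mx (\row_i (\sum_j A i j)).

Definition transition_mx (R : realType) (n : nat) (A : 'M[R]_n) : 'M[R]_n :=
  invmx (degree_mx A) *m A.

Definition stationary_dist (R : realType) (n : nat) (P : 'M[R]_n) (pi : 'rV[R]_n)
  : Prop :=
  (forall i, 0 <= pi 0 i) /\ \sum_i pi 0 i = 1 /\ pi *m P = pi.

Definition laplacian_mx (R : realType) (n : nat) (P : 'M[R]_n) (pi : 'rV[R]_n)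
  : 'M[R]_n :=
  diag_mx pi *m (1%:M - P).

Definition is_MP_pinv (R : realType) (m n : nat) (M : 'M[R]_(m, n)) (X : 'M[R]_(n, m))
  : Prop :=
  [/\ M *m X *m M = M, X *m M *m X = X, (M *m X)^T = M *m X & (X *m M)^T = X *m M].

(* Since [pi] is positive, [z^T L = 0] says that [z] is harmonic for the
   time-reversed walk, which is again irreducible; by the minimum principle the
   left kernel of [L] consists of constant vectors.  Hence [e_m - e_k] is
   orthogonal to it and lies in the range of [L], so [u := L^+ (e_m - e_k)]
   solves [L u = e_m - e_k].  Off [k] this says that [u] is superharmonic for
   [P], so the minimum principle gives [u_k <= u_i], which is the claimed
   inequality since [u_j = L^+_jm - L^+_jk]. *)

From HB Require Import structures.
From mathcomp Require Import all_boot all_order all_algebra.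
From mathcomp Require Import reals.
From mathcomp Require Import zify.
From mathcomp.algebra_tactics Require Import ring lra.
Set Implicit Arguments.
Unset Strict Implicit.
Unset Printing Implicit Defensive.

Import Order.TTheory GRing.Theory Num.Theory.
Local Open Scope ring_scope.

Lemma connect_forward_closed (T : finType) (e : rel T) (S : pred T) :
  (forall x y, S x -> e x y -> S y) -> forall x y, connect e x y -> S x -> S y.
Proof.
move=> S_closed x _ /connectP[p e_p ->].
elim: p x e_p => //= z p IHp x /andP[e_xz e_p] Sx.
exact: IHp e_p (S_closed x z Sx e_xz).
Qed.

Section MinimumPrinciple.

Variables (R : realFieldType) (n : nat) (e : rel 'I_n) (Q : 'M[R]_n).
Hypotheses (Q_ge0 : forall i j, 0 <= Q i j)
  (Q_edge_gt0 : forall i j, e i j -> 0 < Q i j)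
  (Q_row_sum1 : forall i, \sum_j Q i j = 1).

Lemma superharmonic_min_edge (u : 'I_n -> R) x y :
  (forall j, u x <= u j) -> \sum_l Q x l * u l <= u x -> e x y -> u y = u x.
Proof.
move=> x_min u_sup e_xy.
have terms_ge0 l : 0 <= Q x l * (u l - u x) by rewrite mulr_ge0 ?subr_ge0.
have sum_eq0 : \sum_l Q x l * (u l - u x) = 0.
  apply/le_anti; rewrite sumr_ge0 // andbT.
  under eq_bigr do rewrite mulrBr.
  by rewrite sumrB -mulr_suml Q_row_sum1 mul1r subr_le0.
have /eqP := psumr_eq0P (fun l _ => terms_ge0 l) sum_eq0 (i := y) isT.
by rewrite mulf_eq0 gt_eqF ?Q_edge_gt0 //= subr_eq0 => /eqP.
Qed.

Hypothesis e_connected : forall i j, connect e i j.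

Lemma superharmonic_min (u : 'I_n -> R) k :
  (forall j, j != k -> \sum_l Q j l * u l <= u j) -> forall i, u k <= u i.
Proof.
move=> u_sup i.
have [j0 _ j0_min] := @arg_minP _ R _ i predT u isT.
suff -> : u k = u j0 by exact: j0_min.
have [//|ukj0] := eqVneq (u k) (u j0).
suff : u k == u j0 by rewrite (negbTE ukj0).
apply: (@connect_forward_closed _ e (fun x => u x == u j0) _ j0) => // x y /eqP ux e_xy.
have xk : x != k by apply: contraNneq ukj0 => <-; rewrite ux.
have x_min j : u x <= u j by rewrite ux j0_min.
by rewrite (@superharmonic_min_edge u x y x_min (u_sup x xk) e_xy) ux.
Qed.

Lemma harmonic_const (u : 'I_n -> R) :
  (forall j, \sum_l Q j l * u l = u j) -> forall i j, u i = u j.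
Proof.
move=> u_harm i j; apply/le_anti/andP; split; last first.
  by apply: superharmonic_min => x _; rewrite u_harm.
rewrite -lerN2; apply: (@superharmonic_min (fun x => - u x)) => x _.
by under eq_bigr do rewrite mulrN; rewrite sumrN u_harm.
Qed.

End MinimumPrinciple.

Lemma trmx_mul_self_eq0 (R : realDomainType) n (z : 'cV[R]_n) :
  z^T *m z = 0 -> z = 0.
Proof.
move=> /matrixP/(_ 0 0); rewrite !mxE => sum_sq_eq0.
apply/matrixP => i j; rewrite ord1 mxE; apply/eqP; rewrite -sqrf_eq0; apply/eqP.
have sq_ge0 l : 0 <= z^T 0 l * z l 0 by rewrite mxE -expr2 sqr_ge0.
by have := psumr_eq0P (fun l _ => sq_ge0 l) sum_sq_eq0 (i := i) isT; rewrite mxE -expr2.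
Qed.

Lemma MP_pinv_mulmxK (R : realType) m n (M : 'M[R]_(m, n)) X (y : 'cV_m) :
  is_MP_pinv M X -> (forall z : 'cV_m, z^T *m M = 0 -> z^T *m y = 0) ->
  M *m (X *m y) = y.
Proof.
case=> MXM _ MX_sym _ y_perp.
set z := y - M *m (X *m y).
have zM : z^T *m M = 0.
  by rewrite /z mulmxA linearB /= trmx_mul MX_sym mulmxBl -mulmxA MXM subrr.
have : z^T *m z = 0 by rewrite {2}/z mulmxBr y_perp // (mulmxA _ M) zM mul0mx subrr.
by move/trmx_mul_self_eq0/subr0_eq/esym.
Qed.

Section RandomWalkLaplacian.

Variables (R : realType) (n : nat) (e : rel 'I_n) (P : 'M[R]_n) (pi : 'rV[R]_n).
Hypotheses (P_ge0 : forall i j, 0 <= P i j)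
  (P_edge_gt0 : forall i j, e i j -> 0 < P i j)
  (P_row_sum1 : forall i, \sum_j P i j = 1)
  (e_connected : forall i j, connect e i j)
  (pi_stationary : stationary_dist P pi).

Lemma stationary_dist_gt0 j : 0 < pi 0 j.
Proof.
have [pi_ge0 [pi_sum1 piP]] := pi_stationary.
have pi_sum_neq0 : \sum_l pi 0 l <> 0 by rewrite pi_sum1; apply/eqP/oner_neq0.
have [l /andP[_ pi_l_gt0]] := psumr_neq0P (fun l _ => pi_ge0 l) pi_sum_neq0.
apply: (@connect_forward_closed _ e (fun x => 0 < pi 0 x) _ l) => // x y pi_x_gt0 e_xy.
rewrite -piP mxE (bigD1 x) //= ltr_wpDr ?mulr_gt0 ?P_edge_gt0 //.
by rewrite sumr_ge0 // => z _; rewrite mulr_ge0.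
Qed.

Definition time_reversal : 'M[R]_n := \matrix_(l, j) (pi 0 j * P j l / pi 0 l).

Lemma time_reversal_ge0 l j : 0 <= time_reversal l j.
Proof. by rewrite mxE divr_ge0 ?mulr_ge0 // ltW ?stationary_dist_gt0. Qed.

Lemma time_reversal_edge_gt0 l j : e j l -> 0 < time_reversal l j.
Proof. by move=> e_jl; rewrite mxE divr_gt0 ?mulr_gt0 ?P_edge_gt0 ?stationary_dist_gt0. Qed.

Lemma time_reversal_row_sum1 l : \sum_j time_reversal l j = 1.
Proof.
have [_ [_ piP]] := pi_stationary.
have /matrixP/(_ 0 l) := piP; rewrite mxE => pi_l.
under eq_bigr do rewrite mxE.
by rewrite -mulr_suml pi_l divff // gt_eqF ?stationary_dist_gt0.
Qed.

Lemma laplacian_mulmxE (v : 'cV_n) j :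
  (laplacian_mx P pi *m v) j 0 = pi 0 j * (v j 0 - \sum_l P j l * v l 0).
Proof.
rewrite /laplacian_mx -mulmxA mulmxBl mul1mx mul_diag_mx !mxE.
by congr (_ * (_ - _)); rewrite mxE.
Qed.

Lemma mulmx_laplacianE (w : 'rV_n) l :
  (w *m laplacian_mx P pi) 0 l = w 0 l * pi 0 l - \sum_j w 0 j * pi 0 j * P j l.
Proof.
rewrite /laplacian_mx mulmxA mulmxBr mulmx1 mul_mx_diag !mxE.
by congr (_ - _); apply: eq_bigr => j _; rewrite mxE.
Qed.

Lemma laplacian_left_kernel_const (z : 'cV_n) :
  z^T *m laplacian_mx P pi = 0 -> forall i j, z i 0 = z j 0.
Proof.
move=> zL; apply: (@harmonic_const _ _ [rel a b | e b a] time_reversal).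
- exact: time_reversal_ge0.
- exact: time_reversal_edge_gt0.
- exact: time_reversal_row_sum1.
- by move=> a b; rewrite connect_rev /=.
move=> l; have /matrixP/(_ 0 l)/eqP := zL.
rewrite mulmx_laplacianE !mxE subr_eq0 => /eqP z_l.
have pi_l_neq0 : pi 0 l != 0 by rewrite gt_eqF ?stationary_dist_gt0.
rewrite -[z l 0](mulfK pi_l_neq0) z_l mulr_suml.
by apply: eq_bigr => j _; rewrite !mxE; ring.
Qed.

Lemma laplacian_pinvK_delta_diff Lp k m :
  is_MP_pinv (laplacian_mx P pi) Lp ->
  laplacian_mx P pi *m (Lp *m (delta_mx m 0 - delta_mx k 0))
    = delta_mx m 0 - delta_mx k 0 :> 'cV_n.
Proof.
move=> Lp_pinv; apply: MP_pinv_mulmxK Lp_pinv _ => z /laplacian_left_kernel_const z_const.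
by apply/matrixP => a b; rewrite mulmxBr -!colE !ord1 !mxE (z_const m k) subrr.
Qed.

Theorem laplacian_pinv_triangle Lp :
  is_MP_pinv (laplacian_mx P pi) Lp ->
  forall i k m, Lp i k + Lp k m <= Lp i m + Lp k k.
Proof.
move=> Lp_pinv i k m.
set u : 'cV_n := Lp *m (delta_mx m 0 - delta_mx k 0).
have uE j : u j 0 = Lp j m - Lp j k by rewrite /u mulmxBr -!colE !mxE.
have u_sup j : j != k -> \sum_l P j l * u l 0 <= u j 0.
  move=> jk; rewrite -subr_ge0 -(pmulr_rge0 _ (stationary_dist_gt0 j)).
  by rewrite -laplacian_mulmxE laplacian_pinvK_delta_diff // !mxE (negbTE jk) subr0 ler0n.
have := @superharmonic_min _ _ _ _ P_ge0 P_edge_gt0 P_row_sum1 e_connected _ k u_sup i.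
rewrite !uE; lra.
Qed.

End RandomWalkLaplacian.

Lemma row_sum_gt0_connect (R : realType) n (A : 'M[R]_n) i j :
  nonneg_mx A -> connect (edge_rel A) i j -> i != j -> 0 < \sum_l A i l.
Proof.
move=> A_ge0 /connectP[[|l p] /=]; first by move=> _ ->; rewrite eqxx.
case/andP=> A_il _ _ _; rewrite (bigD1 l) //= ltr_wpDr //.
by rewrite sumr_ge0.
Qed.

Section TransitionMatrix.

Variables (R : realType) (n : nat) (A : 'M[R]_n).
Hypotheses (A_ge0 : nonneg_mx A) (A_row_sum_gt0 : forall i, 0 < \sum_j A i j).

Lemma transition_mxE i j : transition_mx A i j = A i j / \sum_l A i l.
Proof.
have D_unit : degree_mx A \in unitmx.
  by rewrite unitmxE det_diag unitfE; apply/prodf_neq0 => l _; rewrite mxE gt_eqF.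
have /matrixP/(_ i j) := mulKVmx D_unit A; rewrite /degree_mx mul_diag_mx !mxE => <-.
by rewrite mulrAC divff ?mul1r ?gt_eqF.
Qed.

Lemma transition_mx_ge0 i j : 0 <= transition_mx A i j.
Proof. by rewrite transition_mxE divr_ge0 ?A_ge0 ?ltW. Qed.

Lemma transition_mx_edge_gt0 i j : edge_rel A i j -> 0 < transition_mx A i j.
Proof. by move=> A_ij; rewrite transition_mxE divr_gt0. Qed.

Lemma transition_mx_row_sum1 i : \sum_j transition_mx A i j = 1.
Proof.
under eq_bigr do rewrite transition_mxE.
by rewrite -mulr_suml divff ?gt_eqF.
Qed.

End TransitionMatrix.

Theorem mainTheorem16 (R : realType) (n : nat) (A : 'M[R]_n) (pi : 'rV[R]_n)
    (Lp : 'M[R]_n) :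
  nonneg_mx A ->
  strongly_connected A ->
  stationary_dist (transition_mx A) pi ->
  is_MP_pinv (laplacian_mx (transition_mx A) pi) Lp ->
  forall i k m : 'I_n, Lp i m + Lp k k >= Lp i k + Lp k m.
Proof.
move=> A_ge0 A_conn pi_stationary Lp_pinv i k m.
have [n_le1|n_gt1] := leqP n 1.
  have ord_eq (a b : 'I_n) : a = b.
    by apply/val_inj => /=; move: (ltn_ord a) (ltn_ord b); lia.
  by rewrite (ord_eq k i) (ord_eq m i).
have A_row_sum_gt0 j : 0 < \sum_l A j l.
  have [j' jj'] : exists j', j != j'.
    apply/existsP; apply: contraLR n_gt1 => /existsPn all_eq.
    rewrite -leqNgt -[n]card_ord -(card1 j); apply/subset_leq_card/subsetP => x _.
    by rewrite inE eq_sym; apply/negbNE/all_eq.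
  exact: row_sum_gt0_connect A_ge0 (A_conn j j') jj'.
exact: (laplacian_pinv_triangle (transition_mx_ge0 A_ge0 A_row_sum_gt0)
  (transition_mx_edge_gt0 A_row_sum_gt0) (transition_mx_row_sum1 A_row_sum_gt0)
  A_conn pi_stationary Lp_pinv i k m).
Qed.
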